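(* Let $\mathbb{A}$ be a medial algebra over a field of characteristic not $2,3$ and let $\mathrm{Idm}^{\times}(\mathbb{A})$ be the set of nonzero idempotents $c$ of $\mathbb{A}$ with $\ker L_c=0$. Then $\mathrm{Idm}^{\times}(\mathbb{A})$, with the algebra multiplication, is a medial idempotent quasigroup. Furthermore, all $c\in\mathrm{Idm}^{\times}(\mathbb{A})$ have the same characteristic polynomial of $L_c$.
   Context: All algebras are commutative, possibly nonassociative, finite-dimensional. Medial: $(xy)(zw)=(xz)(yw)$ identically. $L_c:x\mapsto cx$. A quasigroup is a set with binary operation $\circ$ such that $a\circ x=b$ and $y\circ a=b$ have unique solutions; it is idempotent if $x\circ x=x$ and medial if $(x\circ y)\circ(z\circ w)=(x\circ z)\circ(y\circ w)$. *)

From HB Require Import structures.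
From mathcomp Require Import all_boot all_order all_algebra.
Set Implicit Arguments. Unset Strict Implicit. Unset Printing Implicit Defensive.
Import GRing.Theory.
Local Open Scope ring_scope.

Definition bilinear_mul (F : fieldType) (n : nat)
  (mul : 'rV[F]_n -> 'rV[F]_n -> 'rV[F]_n) : Prop :=
  (forall a x y z, mul (a *: x + y) z = a *: mul x z + mul y z) /\
  (forall a x y z, mul z (a *: x + y) = a *: mul z x + mul z y).

Definition commutative_mul (T : Type) (mul : T -> T -> T) : Prop :=
  forall x y, mul x y = mul y x.

Definition medial_op (T : Type) (mul : T -> T -> T) : Prop :=
  forall x y z w, mul (mul x y) (mul z w) = mul (mul x z) (mul y w).

Definition Idm_x (F : fieldType) (n : nat)
  (mul : 'rV[F]_n -> 'rV[F]_n -> 'rV[F]_n) (c : 'rV[F]_n) : Prop :=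
  c != 0 /\ mul c c = c /\ (forall x, mul c x = 0 -> x = 0).

Definition quasigroup_on (T : Type) (S : T -> Prop) (op : T -> T -> T) : Prop :=
  (forall a b, S a -> S b -> S (op a b)) /\
  (forall a b, S a -> S b ->
     (exists x, S x /\ op a x = b /\ forall x', S x' -> op a x' = b -> x' = x) /\
     (exists y, S y /\ op y a = b /\ forall y', S y' -> op y' a = b -> y' = y)).

Definition idempotent_on (T : Type) (S : T -> Prop) (op : T -> T -> T) : Prop :=
  forall x, S x -> op x x = x.

Definition medial_on (T : Type) (S : T -> Prop) (op : T -> T -> T) : Prop :=
  forall x y z w, S x -> S y -> S z -> S w ->
    op (op x y) (op z w) = op (op x z) (op y w).

Definition medial_idempotent_quasigroup (T : Type) (S : T -> Prop)
  (op : T -> T -> T) : Prop :=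
  quasigroup_on S op /\ idempotent_on S op /\ medial_on S op.

From HB Require Import structures.
From mathcomp Require Import all_boot all_order all_algebra.
Import GRing.Theory.
Local Open Scope ring_scope.

(* If c is an idempotent then mediality gives (c d)(c u) = (c c)(d u) = c (d u),
   i.e. L_c L_(cd) = L_d L_c.  When L_c is invertible this makes L_(cd) similar
   to L_d, and also lets one solve c x = b by x = L_c^-1 b and check that x is
   again an invertible idempotent.  Symmetrically L_(dc) is similar to L_c, and
   cd = dc yields the common characteristic polynomial. *)

Lemma mul_rV_lin1_fun (F : fieldType) (n : nat) (f : 'rV[F]_n -> 'rV[F]_n) :
  linear f -> forall u, u *m lin1_mx f = f u.
Proof.
move=> lin_f u.
pose fL : {linear 'rV[F]_n -> 'rV[F]_n} :=
  HB.pack f (GRing.isLinear.Build _ _ _ _ f lin_f).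
exact: (mul_rV_lin1 fL u).
Qed.

Lemma ker0_unitmx (F : fieldType) (n : nat) (A : 'M[F]_n) :
  (forall v : 'rV[F]_n, v *m A = 0 -> v = 0) -> A \in unitmx.
Proof.
move=> kerA0; rewrite unitmxE unitfE; apply/negP => /det0P [v /eqP v_neq0 vA0].
exact/v_neq0/kerA0.
Qed.

Lemma char_poly_similar (F : fieldType) (n : nat) (A B P : 'M[F]_n) :
  P \in unitmx -> P *m B = A *m P -> char_poly B = char_poly A.
Proof.
move=> P_unit PB.
pose Q := map_mx (@polyC F) P.
have QB : Q *m char_poly_mx B = char_poly_mx A *m Q.
  rewrite /char_poly_mx mulmxBr mulmxBl scalar_mxC; congr (_ - _).
  by rewrite /Q -!map_mxM PB.
have detQ_neq0 : \det Q != 0.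
  by rewrite /Q (det_map_mx (@polyC F)) polyC_eq0 -unitfE -unitmxE.
have := congr1 determinant QB; rewrite !det_mulmx [X in _ = X]mulrC.
exact: mulfI.
Qed.

Section MedialAlgebra.

Set Implicit Arguments.

Variables (F : fieldType) (n : nat) (mul : 'rV[F]_n -> 'rV[F]_n -> 'rV[F]_n).
Hypothesis mul_linear : forall c, linear (mul c).
Hypothesis mulC : commutative_mul mul.
Hypothesis mul_medial : medial_op mul.

Local Notation L c := (lin1_mx (mul c)).
Local Notation Idm := (Idm_x mul).

Lemma mul_rV_L c u : u *m L c = mul c u.
Proof. exact: mul_rV_lin1_fun. Qed.

Lemma mulr0_alg c : mul c 0 = 0.
Proof. by rewrite -mul_rV_L mul0mx. Qed.

Lemma Idm_unitmx c : Idm c -> L c \in unitmx.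
Proof. by move=> [_ [_ ker0]]; apply: ker0_unitmx => v; rewrite mul_rV_L; apply: ker0. Qed.

Lemma Idm_inj c : Idm c -> injective (mul c).
Proof.
move=> Idm_c x y; rewrite -!mul_rV_L.
by apply: row_free_inj; rewrite row_free_unit Idm_unitmx.
Qed.

Lemma Idm_mul_inv c z : Idm c -> mul c (z *m invmx (L c)) = z.
Proof. by move=> Idm_c; rewrite -mul_rV_L mulmxKV ?Idm_unitmx. Qed.

Lemma idem_left_distr c x y : mul c c = c -> mul (mul c x) (mul c y) = mul c (mul x y).
Proof. by move=> cc; rewrite mul_medial cc. Qed.

Lemma idem_L_intertwine c d : mul c c = c -> L c *m L (mul c d) = L d *m L c.
Proof.
by move=> cc; apply/eqP/mulmxP => u; rewrite !mulmxA !mul_rV_L idem_left_distr.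
Qed.

Lemma Idm_mul_closed c d : Idm c -> Idm d -> Idm (mul c d).
Proof.
move=> Idm_c [_ [dd ker_d]]; have [c_neq0 [cc ker_c]] := Idm_c.
have ker0 z : mul (mul c d) z = 0 -> z = 0.
  have <- := Idm_mul_inv z Idm_c; rewrite idem_left_distr // => /ker_c /ker_d ->.
  exact: mulr0_alg.
split; last split; last exact: ker0.
- apply: contra c_neq0 => /eqP cd0; apply/eqP/ker0.
  by rewrite cd0 mulC mulr0_alg.
- by rewrite mul_medial cc dd.
Qed.

Lemma Idm_left_div a b : Idm a -> Idm b ->
  exists x, Idm x /\ mul a x = b /\ forall x', Idm x' -> mul a x' = b -> x' = x.
Proof.
move=> Idm_a [b_neq0 [bb ker_b]]; have [_ [aa ker_a]] := Idm_a.
set x := b *m invmx (L a); have ax : mul a x = b by apply: Idm_mul_inv.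
exists x; split; last split => //; last first.
  by move=> x' _ ax'; apply: (Idm_inj Idm_a); rewrite ax ax'.
split; last split.
- by apply: contra b_neq0 => /eqP x0; rewrite -ax x0 mulr0_alg.
- by apply: (Idm_inj Idm_a); rewrite -idem_left_distr // ax bb.
- move=> z xz; apply/ker_a/ker_b.
  by rewrite -ax idem_left_distr // xz mulr0_alg.
Qed.

Lemma Idm_right_div a b : Idm a -> Idm b ->
  exists y, Idm y /\ mul y a = b /\ forall y', Idm y' -> mul y' a = b -> y' = y.
Proof.
move=> Idm_a Idm_b; have [x [Idm_x [ax x_uniq]]] := Idm_left_div Idm_a Idm_b.
exists x; split; [by [] | split; first by rewrite mulC].
by move=> y Idm_y ya; apply: x_uniq; rewrite // mulC.
Qed.

Lemma char_poly_L_idem_mul c d : Idm c -> char_poly (L (mul c d)) = char_poly (L d).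
Proof.
move=> Idm_c; have [_ [cc _]] := Idm_c.
exact: char_poly_similar (Idm_unitmx Idm_c) (idem_L_intertwine d cc).
Qed.

End MedialAlgebra.

Theorem proposition3p6 (F : fieldType) (n : nat)
  (mul : 'rV[F]_n -> 'rV[F]_n -> 'rV[F]_n) :
  (2%N \notin [pchar F]) -> (3%N \notin [pchar F]) ->
  bilinear_mul mul -> commutative_mul mul -> medial_op mul ->
  medial_idempotent_quasigroup (Idm_x mul) mul /\
  (forall c d, Idm_x mul c -> Idm_x mul d ->
     char_poly (lin1_mx (mul c)) = char_poly (lin1_mx (mul d))).
Proof.
move=> _ _ [_ mul_linr] mulC mul_medial.
have mul_linear c : linear (mul c) by move=> a x y; apply: mul_linr.
split.
  split; last split.
  - split=> [a b|a b Idm_a Idm_b]; first exact: Idm_mul_closed.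
    split; first exact: (Idm_left_div mul_linear mul_medial).
    exact: (Idm_right_div mul_linear mulC mul_medial).
  - by move=> x [_ []].
  - by move=> x y z w _ _ _ _; apply: mul_medial.
move=> c d Idm_c Idm_d.
rewrite -(char_poly_L_idem_mul mul_linear mul_medial c Idm_d) [mul d c]mulC.
exact: char_poly_L_idem_mul.
Qed.
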